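(* For each of the following monads $T$, the associated monad $D$ is idempotent: (a) the Giry monad $P$ of probability measures on $\mathbf{Meas}$; (b) the monad $M$ of subprobability measures on $\mathbf{Meas}$; (c) the lower Vietoris monad $H$ on $\mathbf{Top}$.
   Context: $\mathbf{Meas}$ is the category of measurable spaces and measurable maps. $PX$ is the set of probability measures on $X$, with the coarsest $\sigma$-algebra making $p\mapsto p(A)$ measurable for every measurable $A\subseteq X$; $\eta_X(x)=\delta_x$; $\mu_X(\rho)(A)=\int_{PX}p(A)\,\rho(dp)$; $Pf$ is pushforward. $M$ is defined identically with subprobability measures ($0\le m(X)\le1$). $\mathbf{Top}$ is the category of topological spaces; $HX$ is the set of closed subsets of $X$ (including $\emptyset$) with topology generated by the sets $\{C: C\cap U\neq\emptyset\}$ for $U\subseteq X$ open; $\eta_X(x)=\overline{\{x\}}$; $\mu_X(\mathcal{C})=\overline{\bigcup_{C\in\mathcal{C}}C}$; $Hf(C)=\overline{f(C)}$. For a monad $T$ on $\mathbb{C}$, $\theta_X:DX\to TX$ denotes the equalizer of $\eta_{TX},T\eta_X:TX\to TTX$; $D$ is a monad with $Dg$ the unique map with $\theta_Z\circ Dg=Tg\circ\theta_Y$, unit $e_X$ the unique map with $\theta_X\circ e_X=\eta_X$, and multiplication $m_X$ the unique map with $\theta_X\circ m_X=\mu_X\circ T\theta_X\circ\theta_{DX}$. A monad is idempotent if its multiplication is an isomorphism. *)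

From HB Require Import structures.
From mathcomp Require Import all_boot all_order all_algebra.
From mathcomp Require Import all_classical all_reals all_analysis.
From mathcomp Require Import giry.

Set Implicit Arguments.
Unset Strict Implicit.
Unset Printing Implicit Defensive.
Import Order.TTheory GRing.Theory Num.Theory.

Local Open Scope classical_set_scope.
Local Open Scope ereal_scope.

(* Subspaces in Meas: a subset S (containing a given point, since mathcomp    *)
(* measurable types are pointed) of a measurable space, with the trace       *)
(* sigma-algebra { val^-1 B | B measurable }.  This is the equalizer object   *)
(* in Meas.                                                                   *)
Section msub.
Context {d} (T : measurableType d) (S : set T) (x0 : T) (h : S x0).

(* the carrier mentions the witness h so that the pointed instance below
   is keyed on it *)
Definition msub_car of S x0 : Type := {x : T | S x}.
HB.instance Definition _ := gen_eqMixin (msub_car h).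
HB.instance Definition _ := gen_choiceMixin (msub_car h).
HB.instance Definition _ :=
  isPointed.Build (msub_car h) (exist _ x0 h : msub_car h).

Definition msub_val : msub_car h -> T := @proj1_sig T S.

Definition msub := g_sigma_algebra_preimageType msub_val.
End msub.

Definition meq {d} {T : measurableType d} {R : realType}
  (mu nu : set T -> \bar R) : Prop :=
  forall A, measurable A -> mu A = nu A.

(* PX = pprobability X R (probability measures, sigma-algebra generated by    *)
(* the evaluation maps p |-> p A, A measurable).                              *)
Section Pmonad.
Context (R : realType).

Definition Peta {d} {X : measurableType d} (x : X) : pprobability X R :=
  (@dirac _ _ x R : probability X R).

Definition Pmu {d} {X : measurableType d}
  (rho : set (pprobability X R) -> \bar R) (A : set X) : \bar R :=
  integral rho setT (fun p : pprobability X R => (p : probability X R) A).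

(* the equalizer of eta_{PX} and P eta_X : PX -> PPX, as a subset of PX.
   Both sides are measures on PX, compared on measurable subsets of PX;
   P eta_X is the pushforward along eta_X. *)
Definition PDset {d} (X : measurableType d) : set (pprobability X R) :=
  [set p : pprobability X R | meq (@dirac _ _ p R) (pushforward (p : probability X R) (@Peta d X))].

Arguments PDset {d} X.

Lemma PDset_eta {d} (X : measurableType d) : PDset X (Peta (point : X)).
Proof. by move=> B mB; rewrite /pushforward /=. Qed.

Definition PD {d} (X : measurableType d) := msub (@PDset_eta d X).
Definition Ptheta {d} (X : measurableType d) : PD X -> pprobability X R :=
  @msub_val _ _ _ _ (@PDset_eta d X).
End Pmonad.

(* (b) The monad M of subprobability measures: MX = giry X R.                 *)
Section Mmonad.
Context (R : realType).

Definition Meta {d} {X : measurableType d} (x : X) : giry X R := giry_ret x.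

Definition Mmu {d} {X : measurableType d}
  (rho : set (giry X R) -> \bar R) (A : set X) : \bar R :=
  integral rho setT (fun p : giry X R => p A).

Definition MDset {d} (X : measurableType d) : set (giry X R) :=
  [set p : giry X R | meq (@dirac _ _ p R) (pushforward p (@Meta d X))].

Arguments MDset {d} X.

Lemma MDset_eta {d} (X : measurableType d) : MDset X (Meta (point : X)).
Proof. by move=> B mB; rewrite /pushforward /=. Qed.

Definition MD {d} (X : measurableType d) := msub (@MDset_eta d X).
Definition Mtheta {d} (X : measurableType d) : MD X -> giry X R :=
  @msub_val _ _ _ _ (@MDset_eta d X).
End Mmonad.

Section Hmonad.

Definition Hsp (X : topologicalType) : Type := {C : set X | closed C}.
HB.instance Definition _ (X : topologicalType) := gen_eqMixin (Hsp X).
HB.instance Definition _ (X : topologicalType) := gen_choiceMixin (Hsp X).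
HB.instance Definition _ (X : topologicalType) :=
  @isSubBaseTopological.Build (Hsp X) (set X) open
    (fun U => [set C : Hsp X | (proj1_sig C `&` U) !=set0]).

Definition Hval {X : topologicalType} (C : Hsp X) : set X := proj1_sig C.

Definition Heta {X : topologicalType} (x : X) : Hsp X :=
  exist _ (closure [set x]) (@closed_closure X [set x]).

Definition Hmap {X Y : topologicalType} (f : X -> Y) (C : Hsp X) : Hsp Y :=
  exist _ (closure (f @` Hval C)) (@closed_closure Y (f @` Hval C)).

Definition Hmu {X : topologicalType} (CC : Hsp (Hsp X)) : Hsp X :=
  exist _ (closure (\bigcup_(C in Hval CC) Hval C))
    (@closed_closure X (\bigcup_(C in Hval CC) Hval C)).

Definition HDset (X : topologicalType) : set (Hsp X) :=
  [set C | Heta C = Hmap Heta C].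
Arguments HDset X : clear implicits.

Definition HD (X : topologicalType) : Type := set_type (HDset X).
HB.instance Definition _ (X : topologicalType) :=
  Topological.on (HD X).
Definition Htheta {X : topologicalType} : HD X -> Hsp X := @set_val _ (HDset X).

End Hmonad.

(* Write DX for the equalizer of eta_{TX} and T eta_X, with inclusion theta_X.
   The multiplication m of D is mu_X o T theta_X restricted to DDX, and its
   inverse is the unit e_{DX}, i.e. eta_{TDX} restricted to DX; m (e p) = p is
   just a unit law of T.
   For T = P, M: measurable sets of TX cannot separate measures that agree on
   measurable sets, and mu_X (T theta_X (eta y)) agrees with theta_X y; hence for
   s in D(DX) the equalizer condition of s gives delta_{m s} B = s (theta_X^-1 B)
   for every measurable B.  Integrating the equalizer condition of the points of
   DX against s then shows that m s lies in DX, and the same identity says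
   e (m s) = s.
   For T = H: a closed set C lies in DX exactly when it is irreducible (nonempty,
   and any two open sets meeting C meet it in a common point).  For an
   irreducible closed family c of irreducible closed sets, the closure of the
   union of c is again irreducible, and it is a generic point of c, i.e.
   c = closure {m c}; that is e (m c) = c. *)

From HB Require Import structures.
From mathcomp Require Import all_boot all_order all_algebra.
From mathcomp Require Import all_classical all_reals all_analysis giry finmap.
From mathcomp Require Import measurable_realfun lebesgue_integral.
Import Order.TTheory GRing.Theory Num.Theory.

Local Open Scope classical_set_scope.
Local Open Scope ereal_scope.

Lemma g_sigma_invariant {T : Type} {G : set_system T} {E : T -> T -> Prop} :
  (forall B, G B -> forall p q, E p q -> B p <-> B q) ->
  forall B, <<s G >> B -> forall p q, E p q -> B p <-> B q.
Proof.
move=> GE; apply: smallest_sub GE; split.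
- by [].
- by move=> B BE p q /BE pq; split=> -[_ nBp]; split=> // /pq.
- by move=> F FE p q pq; split=> -[n _ /(FE n p q pq) ?]; exists n.
Qed.

Section msub.
Context {d} {T : measurableType d} {S : set T} {x0 : T} (h : S x0).

Lemma measurable_msub_val : measurable_fun setT (@msub_val _ _ _ _ h : msub h -> T).
Proof. by move=> _ B mB; exists B. Qed.

Lemma measurable_fun_msub {d'} {Z : measurableType d'} (f : Z -> msub h) :
  measurable_fun setT (@msub_val _ _ _ _ h \o f) -> measurable_fun setT f.
Proof. by move=> mf _ _ [B mB <-]; rewrite setTI; exact: mf measurableT B mB. Qed.

End msub.

Lemma dirac_image_equalizer {dY dTY dZ} {Y : measurableType dY}
    {TY : measurableType dTY} {Z : measurableType dZ} {R : realType}
    (nu : set Y -> \bar R) (eta : Y -> TY) (Phi : TY -> Z) (f : Y -> Z) (s : TY) :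
  meq (\d_s)%R (pushforward nu eta) -> measurable_fun setT Phi ->
  (forall B, measurable B -> eta @^-1` (Phi @^-1` B) = f @^-1` B) ->
  forall B, measurable B -> (\d_(Phi s))%R B = nu (f @^-1` B).
Proof.
move=> hs mPhi PhiE B mB.
have mPhiB : measurable (Phi @^-1` B) by rewrite -[_ @^-1` _]setTI; exact: mPhi.
by rewrite -PhiE // -[RHS]hs // !diracE.
Qed.

Lemma integral_dirac_preimage {dY dZ} {Y : measurableType dY} {Z : measurableType dZ}
    {R : realType} (mu : measure Y R) (f : Y -> Z) (B : set Z) :
  measurable_fun setT f -> measurable B ->
  \int[mu]_y (\d_(f y))%R B = mu (f @^-1` B).
Proof.
move=> mf mB; have mfB : measurable (f @^-1` B) by rewrite -[_ @^-1` _]setTI; exact: mf.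
by rewrite -[f @^-1` B]setIT -integral_indic.
Qed.

Section pprobability.
Context {R : realType} {d} {T : measurableType d}.

Lemma measurable_pprobability_ev (A : set T) : measurable A ->
  measurable_fun setT (fun p : pprobability T R => (p : probability T R) A).
Proof.
move=> mA _; apply: (measurability _ (ErealGenInftyO.measurableE R)) => //.
move=> _ [_ [r ->] <-]; rewrite setTI.
have -> : (fun p : pprobability T R => (p : probability T R) A) @^-1` `]-oo, r%:E[ =
    mset A r by apply/seteqP; split => p; rewrite /= in_itv.
have [r0|r0] := ltP r 0%R; first by rewrite lt0_mset.
have [r1|r1] := ltP 1%R r; first by rewrite gt1_mset.
by apply: sub_sigma_algebra; exists r; [rewrite /= in_itv /= r0 r1 | exists A].
Qed.

Lemma measurable_pprobability_codensity {d'} {Z : measurableType d'}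
    (f : Z -> pprobability T R) :
  (forall A, measurable A -> measurable_fun setT (fun z => (f z : probability T R) A)) ->
  measurable_fun setT f.
Proof.
move=> mf _; apply: (measurability (@pset _ _ _ : set (set (pprobability T R)))) => //.
move=> _ [_ [r _ [A mA <-]] <-].
rewrite (_ : _ `&` _ = [set: Z] `&` [set z | (f z : probability T R) A < r%:E]) //.
by apply: emeasurable_fun_infty_o => //; exact: mf.
Qed.

Lemma pprobability_measurable_saturated (B : set (pprobability T R)) :
  measurable B -> forall p q : pprobability T R,
  meq (p : probability T R) (q : probability T R) -> B p -> B q.
Proof.
move=> mB p q pq.
have hG : forall B, (@pset _ T R) B -> forall p q : pprobability T R,
    meq (p : probability T R) (q : probability T R) -> B p <-> B q.
  by move=> _ [r _ [A mA <-]] p' q' p'q'; rewrite /mset /= p'q'.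
exact: (g_sigma_invariant hG _ mB _ _ pq).1.
Qed.

Definition pprobability_giry (p : pprobability T R) : giry T R :=
  (p : probability T R) : subprobability T R.

Lemma measurable_pprobability_giry : measurable_fun setT pprobability_giry.
Proof.
by apply: measurable_giry_codensity => // A mA; exact: measurable_pprobability_ev.
Qed.

Lemma measurable_Peta : measurable_fun setT (@Peta R d T).
Proof.
by apply: measurable_pprobability_codensity => A mA; exact: measurable_fun_dirac.
Qed.

End pprobability.

Lemma giry_measurable_saturated {R : realType} {d} {T : measurableType d}
    (B : set (giry T R)) :
  measurable B -> forall p q : giry T R, meq p q -> B p -> B q.
Proof.
move=> mB p q pq.
have hG : forall B, (\bigcup_(A in measurable) preimg_giry_ev A) B ->
    forall p q : giry T R, meq p q -> B p <-> B q.
  by move=> _ [A mA [E mE <-]] p' q' p'q'; rewrite /= /giry_ev p'q'.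
exact: (g_sigma_invariant hG _ mB _ _ pq).1.
Qed.

Lemma PDset_Peta {R : realType} {d} {X : measurableType d} (p : X) :
  @PDset R _ X (Peta R p).
Proof. by []. Qed.

Section PD_multiplication.
Context {R : realType} {d} (X : measurableType d).

Local Notation Y := (PD R X).
Local Notation theta := (@Ptheta R d X).

Lemma measurable_Ptheta : measurable_fun setT theta.
Proof. exact: measurable_msub_val. Qed.

Let theta_giry : Y -> giry X R := pprobability_giry \o theta.

Let measurable_theta_giry : measurable_fun setT theta_giry.
Proof. exact: measurableT_comp measurable_pprobability_giry measurable_Ptheta. Qed.

Let join_theta (s : pprobability Y R) : giry X R :=
  giry_join (giry_map measurable_theta_giry (pprobability_giry s)).

Let join_thetaE s A : measurable A ->
  join_theta s A = \int[s : probability Y R]_y (theta y : probability X R) A.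
Proof. by move=> mA; rewrite /= giry_int_map //; exact: measurable_giry_ev. Qed.

Let join_theta_setT s : join_theta s setT = 1.
Proof.
rewrite join_thetaE // (eq_integral (cst 1)); last by move=> y _; rewrite probability_setT.
by rewrite integral_cst // mul1e; exact: probability_setT.
Qed.

(* [join_theta s] is already a probability measure; [mnormalize] only
   repackages it as an element of [pprobability X R] *)
Definition PDjoin (s : pprobability Y R) : pprobability X R :=
  mnormalize (join_theta s) point.

Lemma PDjoinE s A : measurable A ->
  (PDjoin s : probability X R) A =
    \int[s : probability Y R]_y (theta y : probability X R) A.
Proof.
have mu1 : (join_theta s : measure X R) setT = 1 := join_theta_setT s.
move=> mA; rewrite /PDjoin /= /mnormalize mu1 onee_eq0 /= invr1 mule1.
exact: join_thetaE.
Qed.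

Lemma measurable_PDjoin : measurable_fun setT PDjoin.
Proof.
apply: measurable_pprobability_codensity => A mA.
pose f := (fun p : pprobability X R => (p : probability X R) A) \o theta.
have mf : measurable_fun setT f.
  exact: measurableT_comp (measurable_pprobability_ev _ mA) measurable_Ptheta.
rewrite (_ : (fun s => _) = giry_int ^~ f \o pprobability_giry).
  apply: measurableT_comp measurable_pprobability_giry.
  by apply: measurable_giry_int.
by apply/funext => s; rewrite PDjoinE.
Qed.

Lemma PDjoin_Peta (y : Y) :
  meq (PDjoin (Peta R y) : probability X R) (theta y : probability X R).
Proof.
move=> A mA; rewrite PDjoinE // integral_dirac ?diracT ?mul1e //.
exact: measurableT_comp (measurable_pprobability_ev _ mA) measurable_Ptheta.
Qed.

Lemma preimage_Peta_PDjoin B : measurable B ->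
  Peta R @^-1` (PDjoin @^-1` B) = theta @^-1` B.
Proof.
move=> mB; apply/seteqP; split=> y /=; apply: pprobability_measurable_saturated => //.
  exact: PDjoin_Peta.
by move=> A mA; rewrite PDjoin_Peta.
Qed.

Lemma dirac_PDjoin {s : pprobability Y R} : @PDset R _ Y s ->
  forall B, measurable B -> (\d_(PDjoin s))%R B = (s : probability Y R) (theta @^-1` B).
Proof.
move=> Ds; apply: dirac_image_equalizer Ds measurable_PDjoin _.
exact: preimage_Peta_PDjoin.
Qed.

Lemma PDjoin_PDset {s : pprobability Y R} : @PDset R _ Y s -> @PDset R _ X (PDjoin s).
Proof.
move=> Ds B mB; have mB' : measurable (Peta R @^-1` B).
  by rewrite -[_ @^-1` _]setTI; exact: measurable_Peta.
rewrite dirac_PDjoin // /pushforward PDjoinE // -integral_dirac_preimage //.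
  by apply: eq_integral => y _; rewrite (proj2_sig y).
exact: measurable_Ptheta.
Qed.

Definition Pm (rho : PD R Y) : Y :=
  exist _ (PDjoin (Ptheta rho)) (PDjoin_PDset (proj2_sig rho)).

Definition Pe (p : Y) : PD R Y := exist _ (Peta R p) (PDset_Peta p).

Lemma PD_mult_iso :
  measurable_fun setT Pm /\
  (forall rho : PD R Y, meq (Ptheta (Pm rho) : probability X R)
     (Pmu (pushforward (Ptheta rho : probability Y R) theta))) /\
  measurable_fun setT Pe /\
  (forall p : Y, meq (Ptheta (Pm (Pe p)) : probability X R) (theta p : probability X R)) /\
  (forall rho : PD R Y, meq (Ptheta (Pe (Pm rho)) : probability Y R)
     (Ptheta rho : probability Y R)).
Proof.
split.
  exact/measurable_fun_msub/(measurableT_comp measurable_PDjoin)/measurable_msub_val.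
split.
  move=> rho A mA; rewrite /Pmu ge0_integral_pushforward //.
  - exact: PDjoinE.
  - exact: measurable_Ptheta.
  - exact: measurable_pprobability_ev.
split; first exact/measurable_fun_msub/measurable_Peta.
split; first exact: PDjoin_Peta.
move=> rho _ [B mB <-]; rewrite setTI.
by rewrite -(dirac_PDjoin (proj2_sig rho)) // !diracE.
Qed.

End PD_multiplication.

Lemma MDset_Meta {R : realType} {d} {X : measurableType d} (p : X) :
  @MDset R _ X (Meta R p).
Proof. by []. Qed.

Section MD_multiplication.
Context {R : realType} {d} (X : measurableType d).

Local Notation Y := (MD R X).
Local Notation theta := (@Mtheta R d X).

Lemma measurable_Mtheta : measurable_fun setT theta.
Proof. exact: measurable_msub_val. Qed.

Definition MDjoin (s : giry Y R) : giry X R := giry_join (giry_map measurable_Mtheta s).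

Lemma measurable_MDjoin : measurable_fun setT MDjoin.
Proof. exact: measurableT_comp measurable_giry_join (measurable_giry_map _). Qed.

Lemma MDjoinE s A : measurable A -> MDjoin s A = \int[s]_y theta y A.
Proof. by move=> mA; rewrite /= giry_int_map //; exact: measurable_giry_ev. Qed.

Lemma MDjoin_Meta (y : Y) : meq (MDjoin (Meta R y)) (theta y).
Proof.
move=> A mA; rewrite MDjoinE // integral_dirac ?diracT ?mul1e //.
exact: measurableT_comp (measurable_giry_ev mA) measurable_Mtheta.
Qed.

Lemma preimage_Meta_MDjoin B : measurable B ->
  Meta R @^-1` (MDjoin @^-1` B) = theta @^-1` B.
Proof.
move=> mB; apply/seteqP; split=> y /=; apply: giry_measurable_saturated => //.
  exact: MDjoin_Meta.
by move=> A mA; rewrite MDjoin_Meta.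
Qed.

Lemma dirac_MDjoin {s : giry Y R} : @MDset R _ Y s ->
  forall B, measurable B -> (\d_(MDjoin s))%R B = s (theta @^-1` B).
Proof.
move=> Ds; apply: dirac_image_equalizer Ds measurable_MDjoin _.
exact: preimage_Meta_MDjoin.
Qed.

Lemma MDjoin_MDset {s : giry Y R} : @MDset R _ Y s -> @MDset R _ X (MDjoin s).
Proof.
move=> Ds B mB; have mB' : measurable (Meta R @^-1` B).
  by rewrite -[_ @^-1` _]setTI; exact: measurable_giry_ret.
rewrite dirac_MDjoin // /pushforward MDjoinE // -integral_dirac_preimage //.
  by apply: eq_integral => y _; rewrite (proj2_sig y).
exact: measurable_Mtheta.
Qed.

Definition Mm (rho : MD R Y) : Y :=
  exist _ (MDjoin (Mtheta rho)) (MDjoin_MDset (proj2_sig rho)).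

Definition Me (p : Y) : MD R Y := exist _ (Meta R p) (MDset_Meta p).

Lemma MD_mult_iso :
  measurable_fun setT Mm /\
  (forall rho : MD R Y, meq (Mtheta (Mm rho)) (Mmu (pushforward (Mtheta rho) theta))) /\
  measurable_fun setT Me /\
  (forall p : Y, meq (Mtheta (Mm (Me p))) (theta p)) /\
  (forall rho : MD R Y, meq (Mtheta (Me (Mm rho))) (Mtheta rho)).
Proof.
split.
  exact/measurable_fun_msub/(measurableT_comp measurable_MDjoin)/measurable_msub_val.
split; first by []. (* [giry_join] and [giry_map] unfold to [Mmu] and [pushforward] *)
split; first exact/measurable_fun_msub/measurable_giry_ret.
split; first exact: MDjoin_Meta.
move=> rho _ [B mB <-]; rewrite setTI.
by rewrite -(dirac_MDjoin (proj2_sig rho)) // !diracE.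
Qed.

End MD_multiplication.

Definition hits {T : Type} (A U : set T) := A `&` U !=set0.

Definition irreducible {T : topologicalType} (C : set T) :=
  C !=set0 /\
  forall U V, open U -> open V -> hits C U -> hits C V -> hits C (U `&` V).

Section topology.
Context {T : topologicalType}.

Lemma irreducible_hits_seq {C : set T} {s : seq (set T)} : irreducible C ->
  (forall U, U \in s -> open U /\ hits C U) ->
  exists2 x, C x & forall U, U \in s -> U x.
Proof.
move=> [[x Cx] irrC] sC.
pose S (s : seq (set T)) : set T := [set y | forall U, U \in s -> U y].
suff [_ [y [Cy Sy]]] : open (S s) /\ hits C (S s) by exists y.
elim: s sC => [|U s IHs] sC.
  by rewrite (_ : S [::] = setT); [split; [exact: openT | exists x] | exact/seteqP].
have [oU CU] := sC U (mem_head _ _).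
have [oS CS] : open (S s) /\ hits C (S s).
  by apply: IHs => V Vs; apply: sC; rewrite inE Vs orbT.
have -> : S (U :: s) = U `&` S s.
  apply/seteqP; split=> y.
    by move=> Sy; split=> [|V Vs]; apply: Sy; rewrite ?mem_head // in_cons Vs orbT.
  by move=> [Uy Sy] V; rewrite inE => /orP[/eqP ->|/Sy].
by split; [exact: openI | exact: irrC].
Qed.

Lemma closure_hits {A U : set T} {x : T} : closure A x -> open U -> U x -> hits A U.
Proof. by move=> Ax oU Ux; apply: Ax; exact: open_nbhs_nbhs. Qed.

Lemma closure1_open {a b : T} {U : set T} : closure [set a] b -> open U -> U b -> U a.
Proof. by move=> ab oU Ub; have [_ [/= -> ]] := closure_hits ab oU Ub. Qed.

Lemma hits_closure {A U : set T} : open U -> hits (closure A) U <-> hits A U.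
Proof.
move=> oU; split=> [[x [Ax Ux]]|[x [Ax Ux]]]; first exact: closure_hits Ax oU Ux.
by exists x; split=> //; exact: subset_closure.
Qed.

Lemma nbhs_bigcap_open {I : choiceType} (F : {fset I}) (f : I -> set T) {x : T} :
  (forall i, i \in F -> open (f i) /\ f i x) -> nbhs x (\bigcap_(i in [set` F]) f i).
Proof. by move=> Ff; apply: filter_bigI => i /Ff ?; exact: open_nbhs_nbhs. Qed.

Lemma closure_sub_closed {A C : set T} : closed C -> A `<=` C -> closure A `<=` C.
Proof. by rewrite closureE; exact: smallest_sub. Qed.

End topology.

Lemma Hval_inj {Y : topologicalType} : injective (@Hval Y).
Proof. by move=> [A cA] [B cB] /= AB; exact: eq_exist. Qed.

Section lower_Vietoris.
Context {Y : topologicalType}.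

Definition Hhit (U : set Y) : set (Hsp Y) := [set C | hits (Hval C) U].

Lemma open_Hhit {U : set Y} : open U -> open (Hhit U).
Proof.
move=> oU; exists [set Hhit U]; last exact: bigcup_set1.
by move=> _ ->; exact: (@finI_from1 _ (Hsp Y) open (fun U => Hhit U)).
Qed.

Lemma Hsub_closed {C : set Y} : closed C -> closed [set C' : Hsp Y | Hval C' `<=` C].
Proof.
move=> cC; have -> : [set C' : Hsp Y | Hval C' `<=` C] = ~` Hhit (~` C).
  apply/seteqP; split=> C' /=; first by move=> C'C [x [/C'C Cx /(_ Cx)]].
  by move=> C'C x C'x; apply: contrapT => Cx; apply: C'C; exists x.
exact/open_closedC/open_Hhit/closed_openC.
Qed.

Lemma Hsp_nbhsP (C : Hsp Y) (A : set (Hsp Y)) : nbhs C A ->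
  exists F : {fset set Y}, (forall U, U \in F -> open U /\ hits (Hval C) U) /\
    (forall C', (forall U, U \in F -> hits (Hval C') U) -> A C').
Proof.
case=> B [[D Dbasic <-] [W DW WC] BA].
have [F Fopen FW] := Dbasic W DW.
exists F; split.
  move=> U UF; split; first exact: set_mem (Fopen U UF).
  by move: WC; rewrite -FW; apply.
by move=> C' FC'; apply: BA; exists W => //; rewrite -FW.
Qed.

Lemma Hhit_Heta (x : Y) {U : set Y} : open U -> Hhit U (Heta x) <-> U x.
Proof.
move=> oU; split=> [[y [xy Uy]]|Ux]; first exact: closure1_open xy oU Uy.
by exists x; split=> //; exact: subset_closure.
Qed.

Lemma Htheta_inj : injective (@Htheta Y).
Proof. exact: val_inj. Qed.

Lemma open_Htheta_preimage {W : set (Hsp Y)} : open W -> open (@Htheta Y @^-1` W).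
Proof. by move=> oW; exists W. Qed.

Lemma HD_nbhsP (D : HD Y) (A : set (HD Y)) : nbhs D A ->
  exists F : {fset set Y}, (forall U, U \in F -> open U /\ hits (Hval (Htheta D)) U) /\
    (forall D', (forall U, U \in F -> hits (Hval (Htheta D')) U) -> A D').
Proof.
case=> B [[W oW <-] WD BA].
have [F [FD FW]] : exists F : {fset set Y},
    (forall U, U \in F -> open U /\ hits (Hval (Htheta D)) U) /\
    (forall C', (forall U, U \in F -> hits (Hval C') U) -> W C').
  by apply: Hsp_nbhsP; exact: open_nbhs_nbhs.
by exists F; split=> // D' FD'; apply: BA; exact: FW.
Qed.

Lemma HDsetE (C : Hsp Y) :
  @HDset Y C <-> closure [set C] = closure (Heta @` Hval C).
Proof. by split=> [/(congr1 Hval)//|CE]; apply: Hval_inj. Qed.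

Lemma HDsetP (C : Hsp Y) : @HDset Y C <-> irreducible (Hval C).
Proof.
rewrite HDsetE; split=> [CE|irrC].
  have Cdense : closure (Heta @` Hval C) C by rewrite -CE; exact: subset_closure.
  split; first by have [_ [[x Cx _] _]] := closure_hits Cdense openT I; exists x.
  move=> U V oU oV CU CV.
  have [_ [[x Cx <-] [xU xV]]] :=
    closure_hits Cdense (openI (open_Hhit oU) (open_Hhit oV)) (conj CU CV).
  by exists x; split=> //; split; [exact/(Hhit_Heta x oU) | exact/(Hhit_Heta x oV)].
apply/seteqP; split; apply: closure_sub_closed; try exact: closed_closure.
- move=> _ -> A /Hsp_nbhsP [F [FC FA]].
  have [x Cx Fx] := irreducible_hits_seq irrC FC.
  exists (Heta x); split; first by exists x.
  by apply: FA => U UF; apply/(Hhit_Heta x (FC U UF).1); exact: Fx.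
- move=> _ [x Cx <-] A /Hsp_nbhsP [F [Fx FA]].
  exists C; split=> //; apply: FA => U UF.
  by exists x; split=> //; apply/(Hhit_Heta x (Fx U UF).1); exact: (Fx U UF).2.
Qed.

Lemma irreducible_Htheta (D : HD Y) : irreducible (Hval (Htheta D)).
Proof. exact/HDsetP/set_valP. Qed.

Lemma closure1_HD_subset (D E : HD Y) :
  closure [set E] D -> Hval (Htheta D) `<=` Hval (Htheta E).
Proof.
move=> ED x Dx; apply: contrapT => Ex.
have oEc : open (~` Hval (Htheta E)) by apply: closed_openC; exact: proj2_sig.
have [y [Ey /(_ Ey)//]] :=
  closure1_open ED (open_Htheta_preimage (open_Hhit oEc)) (ex_intro _ x (conj Dx Ex)).
Qed.

Lemma continuous_HD {Z : topologicalType} (f : Z -> HD Y) :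
  (forall U, open U -> open [set z | hits (Hval (Htheta (f z))) U]) -> continuous f.
Proof.
move=> fU z A /HD_nbhsP [F [Ffz FA]].
apply: (filterS (fun z' Fz' => FA (f z') Fz')).
have : nbhs z (\bigcap_(U in [set` F]) [set z | hits (Hval (Htheta (f z))) U]).
  by apply: nbhs_bigcap_open => U /Ffz[/fU].
by apply: filterS => z' Fz' U UF; exact: Fz'.
Qed.

End lower_Vietoris.

Section HD_multiplication.
Context (X : topologicalType).

Let Hunion (c : HD (HD X)) : set X :=
  \bigcup_(C in Hval (Hmap Htheta (Htheta c))) Hval C.

Let Hunion_sub (c : HD (HD X)) (D : HD X) :
  Hval (Htheta c) D -> Hval (Htheta D) `<=` Hunion c.
Proof. by move=> cD x Dx; exists (Htheta D) => //; apply: subset_closure; exists D. Qed.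

Let hits_Hunion (c : HD (HD X)) {U : set X} : open U ->
  hits (Hunion c) U <-> exists2 D, Hval (Htheta c) D & hits (Hval (Htheta D)) U.
Proof.
move=> oU; split=> [[x [[C cC Cx] Ux]]|[D cD [x [Dx Ux]]]].
  have [_ [[D cD <-] DU]] := closure_hits cC (open_Hhit oU) (ex_intro _ x (conj Cx Ux)).
  by exists D.
by exists x; split=> //; exact: Hunion_sub cD x Dx.
Qed.

Lemma Hmu_HDset (c : HD (HD X)) : @HDset X (Hmu (Hmap Htheta (Htheta c))).
Proof.
apply/HDsetP => /=; have [[D cD] irr_c] := irreducible_Htheta c.
split.
  have [[x Dx] _] := irreducible_Htheta D.
  by exists x; apply: subset_closure; exact: Hunion_sub cD x Dx.
move=> U V oU oV /(hits_closure oU)/(hits_Hunion _ oU) [D1 cD1 D1U].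
move=> /(hits_closure oV)/(hits_Hunion _ oV) [D2 cD2 D2V].
apply/(hits_closure (openI oU oV))/(hits_Hunion _ (openI oU oV)).
have [E [cE [EU EV]]] := irr_c _ _ (open_Htheta_preimage (open_Hhit oU))
  (open_Htheta_preimage (open_Hhit oV)) (ex_intro _ D1 (conj cD1 D1U))
  (ex_intro _ D2 (conj cD2 D2V)).
by exists E => //; exact: (irreducible_Htheta E).2 _ _ oU oV EU EV.
Qed.

Lemma Heta_HDset (C : HD X) : @HDset (HD X) (Heta C).
Proof.
apply/HDsetP; split; first by exists C; exact: subset_closure.
move=> U V oU oV [D [CD DU]] [E [CE EV]].
exists C; split; first exact: subset_closure.
by split; [exact: closure1_open CD oU DU | exact: closure1_open CE oV EV].
Qed.

Definition Hm (c : HD (HD X)) : HD X :=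
  exist _ (Hmu (Hmap Htheta (Htheta c))) (mem_set (Hmu_HDset c)).

Definition He (C : HD X) : HD (HD X) := exist _ (Heta C) (mem_set (Heta_HDset C)).

Lemma continuous_Hm : continuous Hm.
Proof.
apply: continuous_HD => U oU.
rewrite (_ : [set z | _] = Htheta @^-1` Hhit (Htheta @^-1` Hhit U)).
  exact/open_Htheta_preimage/open_Hhit/open_Htheta_preimage/open_Hhit.
apply/seteqP; split=> c /=.
  by move=> /(hits_closure oU)/(hits_Hunion _ oU) [D cD DU]; exists D.
by move=> [D [cD DU]]; apply/(hits_closure oU)/(hits_Hunion _ oU); exists D.
Qed.

Lemma continuous_He : continuous He.
Proof.
apply: continuous_HD => U oU; rewrite (_ : [set z | _] = U) //.
apply/seteqP; split=> C /=; first by move=> [D [CD DU]]; exact: closure1_open CD oU DU.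
by move=> UC; exists C; split=> //; exact: subset_closure.
Qed.

Lemma HeK : cancel He Hm.
Proof.
move=> C; apply: Htheta_inj; apply: Hval_inj => /=; apply/seteqP; split.
  apply: closure_sub_closed; first exact: proj2_sig.
  have CE : Htheta @` Hval (Heta C) `<=` [set C' | Hval C' `<=` Hval (Htheta C)].
    by move=> _ [D CD <-]; exact: closure1_HD_subset.
  by move=> x [C' /(closure_sub_closed (Hsub_closed (proj2_sig _)) CE)]; apply.
move=> x Cx; apply: subset_closure; exists (Htheta C) => //.
by apply: subset_closure; exists C => //; exact: subset_closure.
Qed.

Lemma HmK : cancel Hm He.
Proof.
move=> c; apply: Htheta_inj; apply: Hval_inj => /=; apply/seteqP; split.
  apply: closure_sub_closed; first exact: proj2_sig.
  move=> _ ->; rewrite [Hval _](closure_id _).1; last exact: proj2_sig.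
  move=> A /HD_nbhsP [F [Fm FA]].
  have [x mx Fx] := irreducible_hits_seq (irreducible_Htheta (Hm c)) Fm.
  have [y [[C' cC' C'y] Fy]] :=
    mx _ (nbhs_bigcap_open F id (fun U UF => conj (Fm U UF).1 (Fx U UF))).
  have [_ [[D cD <-] DF]] := cC' _ (nbhs_bigcap_open F Hhit
    (fun U UF => conj (open_Hhit (Fm U UF).1) (ex_intro _ y (conj C'y (Fy U UF))))).
  by exists D; split=> //; apply: FA => U UF; exact: DF.
move=> D cD A /HD_nbhsP [F [FD FA]]; exists (Hm c); split=> //; apply: FA => U UF.
have [x [Dx Ux]] := (FD U UF).2.
by exists x; split=> //; apply: subset_closure; exact: Hunion_sub cD x Dx.
Qed.

End HD_multiplication.

Theorem theorem5p6 :
  (* (a) Giry monad P of probability measures *)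
  (forall (R : realType) (d : measure_display) (X : measurableType d),
    exists m : PD R (PD R X) -> PD R X,
      measurable_fun setT m /\
      (forall rho : PD R (PD R X),
         meq (Ptheta (m rho) : probability X R)
             (Pmu (pushforward (Ptheta rho : probability (PD R X) R)
                               (@Ptheta R d X)))) /\
      exists g : PD R X -> PD R (PD R X),
        measurable_fun setT g /\
        (forall p : PD R X,
           meq (Ptheta (m (g p)) : probability X R) (Ptheta p : probability X R)) /\
        (forall rho : PD R (PD R X),
           meq (Ptheta (g (m rho)) : probability (PD R X) R)
               (Ptheta rho : probability (PD R X) R))) /\
  (* (b) monad M of subprobability measures *)
  (forall (R : realType) (d : measure_display) (X : measurableType d),
    exists m : MD R (MD R X) -> MD R X,
      measurable_fun setT m /\
      (forall rho : MD R (MD R X),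
         meq (Mtheta (m rho)) (Mmu (pushforward (Mtheta rho) (@Mtheta R d X)))) /\
      exists g : MD R X -> MD R (MD R X),
        measurable_fun setT g /\
        (forall p : MD R X, meq (Mtheta (m (g p))) (Mtheta p)) /\
        (forall rho : MD R (MD R X), meq (Mtheta (g (m rho))) (Mtheta rho))) /\
  (* (c) lower Vietoris monad H on Top *)
  (forall X : topologicalType,
    exists m : HD (HD X) -> HD X,
      continuous m /\
      (forall c : HD (HD X), Htheta (m c) = Hmu (Hmap Htheta (Htheta c))) /\
      exists g : HD X -> HD (HD X),
        continuous g /\ cancel g m /\ cancel m g).
Proof.
split; [|split].
- move=> R d X; have [mPm [PmE [mPe [PeK PmK]]]] := PD_mult_iso (R := R) X.
  by exists (Pm X); split=> //; split=> //; exists (Pe X).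
- move=> R d X; have [mMm [MmE [mMe [MeK MmK]]]] := MD_mult_iso (R := R) X.
  by exists (Mm X); split=> //; split=> //; exists (Me X).
- move=> X; exists (Hm X); split; first exact: continuous_Hm.
  split=> //; exists (He X); split; first exact: continuous_He.
  by split; [exact: HeK | exact: HmK].
Qed.
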